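(* Let $n\geq 2$ and let $G$ be the $(2n+1)$-dimensional Heisenberg group $G=\langle x_1,\dots,x_{2n+1}\mid [x_i,x_{n+i}]=x_{2n+1}\ (1\le i\le n),\ \text{all other pairs } x_j,x_k\text{ commute}\rangle$ with Mal'cev basis $(x_1,\dots,x_{2n+1})$. Then for every ordering of a basis of the module $M$ for which the Nickel representation is upper unitriangular, the image of $G$ in $UT_{2n+2}(\mathbb{Z})$ is a distorted subgroup.
   Context: Every $g\in G$ is uniquely $x_1^{a_1}\cdots x_{2n+1}^{a_{2n+1}}$, $a_i\in\mathbb{Z}$. Let $t_i:G\to\mathbb{Z}$ map $x_1^{a_1}\cdots x_{2n+1}^{a_{2n+1}}\mapsto a_i$, viewed in the dual $(\mathbb{Q}G)^*$; $G$ acts on $(\mathbb{Q}G)^*$ by $f^g(h)=f(hg^{-1})$. The $G$-submodule $M$ generated by $t_1,\dots,t_{2n+1}$ is finite-dimensional and faithful (here with $\mathbb{Q}$-basis $\{t_1,\dots,t_{2n+1},1\}$); ordering a basis so that all matrices are upper unitriangular gives the Nickel embedding $G\to UT_{2n+2}(\mathbb{Z})$, the group of upper unitriangular integer matrices. A subgroup $H$ of a finitely generated group $K$ is distorted if $\Delta_H^K(n)=\max\{dist_H(1,h): h\in H, dist_K(1,h)\le n\}$ (word metrics) is not bounded by $Cn$ for any constant $C$. *)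

From mathcomp Require Import all_boot all_order all_algebra all_fingroup.
Set Implicit Arguments. Unset Strict Implicit. Unset Printing Implicit Defensive.
Import GRing.Theory Num.Theory.
Local Open Scope ring_scope.

(* A group element x_1^{a_1} ... x_{2n+1}^{a_{2n+1}} is represented by its  *)
(* exponent vector g : 'I_(2n+1) -> int, 0-indexed: g k = a_{k+1}.          *)
(* Commutator convention [u,v] = u^-1 v^-1 u v, so [x_i,x_{n+i}] = x_{2n+1} *)
(* gives x_{n+i}^b x_i^a = x_i^a x_{n+i}^b x_{2n+1}^{-ab}, whence            *)
(*  (a,b,c)(a',b',c') = (a+a', b+b', c+c' - a'.b)                           *)
(*  (a,b,c)^-1        = (-a, -b, -c - a.b).                                 *)
Definition heis (n : nat) := 'I_(2 * n).+1 -> int.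

Definition hmul (n : nat) (g h : heis n) : heis n := fun k =>
  if (k < 2 * n)%N then g k + h k
  else g k + h k - \sum_(i < n) h (inord i) * g (inord (n + i)).

Definition hinv (n : nat) (g : heis n) : heis n := fun k =>
  if (k < 2 * n)%N then - g k
  else - g k - \sum_(i < n) g (inord i) * g (inord (n + i)).

Definition hgen (n : nat) (i : 'I_(2 * n).+1) : heis n :=
  fun k => if k == i then 1 else 0.

(* The module M: basis t_1, ..., t_{2n+1}, 1 of functions G -> Z (inside    *)
(* (QG)^* ), indexed by 'I_(2n+2): index k < 2n+1 is t_{k+1}, index 2n+1   *)
(* is the constant function 1.  Action f^g (h) = f (h g^-1).                *)
Definition tbasis (n : nat) (k : 'I_(2 * n).+2) : heis n -> int :=
  fun h => if (k < (2 * n).+1)%N then h (inord k) else 1.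

Definition hact (n : nat) (g : heis n) (f : heis n -> int) : heis n -> int :=
  fun h => f (hmul h (hinv g)).

(* A is the matrix of g acting on M in the ordered basis                    *)
(* (tbasis (s 0), ..., tbasis (s (2n+1))) (row convention:                   *)
(*  (b_j)^g = sum_k A j k b_k, so that g |-> A is a homomorphism).          *)
Definition nickel_mat (n : nat) (s : {perm 'I_(2 * n).+2}) (g : heis n)
  (A : 'M[int]_((2 * n).+2)) : Prop :=
  forall (j : 'I_(2 * n).+2) (h : heis n),
    hact g (tbasis (s j)) h = \sum_(k < (2 * n).+2) A j k * tbasis (s k) h.

Definition is_UT (m : nat) (A : 'M[int]_m) : Prop :=
  forall i j : 'I_m, ((j < i)%N -> A i j = 0) /\ (i = j -> A i j = 1).

Definition nickel_image (n : nat) (s : {perm 'I_(2 * n).+2})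
  (A : 'M[int]_((2 * n).+2)) : Prop :=
  exists g : heis n, nickel_mat s g A.

Definition nickel_gens (n : nat) (s : {perm 'I_(2 * n).+2})
  (A : 'M[int]_((2 * n).+2)) : Prop :=
  exists i : 'I_(2 * n).+1,
    nickel_mat s (@hgen n i) A \/ nickel_mat s (hinv (@hgen n i)) A.

Definition ut_gens (m : nat) (A : 'M[int]_m) : Prop :=
  exists i j : 'I_m, (i < j)%N /\
    (A = 1%:M + delta_mx i j \/ A = 1%:M - delta_mx i j).

Definition wlen_le (m : nat) (S : 'M[int]_m -> Prop) (k : nat)
  (A : 'M[int]_m) : Prop :=
  exists w : seq 'M[int]_m,
    (size w <= k)%N /\ (forall B, B \in w -> S B) /\ A = foldr mulmx 1%:M w.

Definition distorted (m : nat) (H SH SK : 'M[int]_m -> Prop) : Prop :=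
  ~ exists C : nat, forall (k : nat) (A : 'M[int]_m),
      H A -> wlen_le SK k A -> wlen_le SH (C * k) A.

(* If the Nickel matrices are unitriangular for the ordering s of the basis
   t_1, ..., t_{2n+1}, 1, reading off two of their entries shows that s puts
   t_{2n+1} before every t_{n+i} and every t_{n+i} before 1: the generator
   x_{n+i} moves t_{n+i} by a multiple of 1, and x_i moves t_{2n+1} by a
   multiple of t_{n+i}.  For n >= 2 this gives positions a < b < c < d with
   the image of the central element x_{2n+1}^(m^3) equal to the elementary
   matrix 1 - m^3 e_ad, which as an iterated commutator of elementary matrices
   has word length O(m) in UT_{2n+2}(Z).  In G, a word of length L has central
   coordinate O(L^2), and the representation is faithful, so that element
   needs length of order m^(3/2) in the image of G. *)

From mathcomp Require Import all_boot all_order all_algebra all_fingroup.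
From mathcomp Require Import ring zify.
Set Implicit Arguments. Unset Strict Implicit. Unset Printing Implicit Defensive.
Import Order.TTheory GRing.Theory Num.Theory.
Local Open Scope ring_scope.

Section HeisenbergGroup.
Variable n : nat.

Local Notation ctr := (inord (2 * n) : 'I_(2 * n).+1).

Definition hone : heis n := fun=> 0.

Definition hpair (g h : heis n) : int :=
  \sum_(i < n) g (inord i) * h (inord (n + i)).

Lemma inord_low_lt (i : 'I_n) : ((inord i : 'I_(2 * n).+1) < 2 * n)%N.
Proof. by have hi := ltn_ord i; rewrite inordK; lia. Qed.

Lemma inord_high_lt (i : 'I_n) : ((inord (n + i) : 'I_(2 * n).+1) < 2 * n)%N.
Proof. by have hi := ltn_ord i; rewrite inordK; lia. Qed.

Lemma ctr_high : ~~ (ctr < 2 * n)%N.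
Proof. by rewrite inordK // ltnn. Qed.

Lemma hmul_low (g h : heis n) (k : 'I_(2 * n).+1) : (k < 2 * n)%N -> hmul g h k = g k + h k.
Proof. by rewrite /hmul => ->. Qed.

Lemma hmul_high (g h : heis n) (k : 'I_(2 * n).+1) : ~~ (k < 2 * n)%N ->
  hmul g h k = g k + h k - hpair h g.
Proof. by rewrite /hmul => /negbTE ->. Qed.

Lemma hinv_low (g : heis n) (k : 'I_(2 * n).+1) : (k < 2 * n)%N -> hinv g k = - g k.
Proof. by rewrite /hinv => ->. Qed.

Lemma hinv_high (g : heis n) (k : 'I_(2 * n).+1) : ~~ (k < 2 * n)%N ->
  hinv g k = - g k - hpair g g.
Proof. by rewrite /hinv => /negbTE ->. Qed.

Lemma hpairNl g h : hpair (hinv g) h = - hpair g h.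
Proof.
by rewrite -sumrN; apply: eq_bigr => i _; rewrite hinv_low ?inord_low_lt ?mulNr.
Qed.

Lemma hpairNr g h : hpair g (hinv h) = - hpair g h.
Proof.
by rewrite -sumrN; apply: eq_bigr => i _; rewrite hinv_low ?inord_high_lt ?mulrN.
Qed.

Lemma hpairDl g h k : hpair (hmul g h) k = hpair g k + hpair h k.
Proof.
by rewrite -big_split; apply: eq_bigr => i _; rewrite hmul_low ?inord_low_lt ?mulrDl.
Qed.

Lemma hpairDr g h k : hpair k (hmul g h) = hpair k g + hpair k h.
Proof.
by rewrite -big_split; apply: eq_bigr => i _; rewrite hmul_low ?inord_high_lt ?mulrDr.
Qed.

Lemma hpair1r g : hpair g hone = 0.
Proof. by apply: big1 => i _; rewrite mulr0. Qed.

Lemma hpair1l g : hpair hone g = 0.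
Proof. by apply: big1 => i _; rewrite mul0r. Qed.

Lemma hmul1g g : hmul hone g =1 g.
Proof.
move=> k; case: (boolP (k < 2 * n)%N) => hk; first by rewrite hmul_low ?add0r.
by rewrite hmul_high // hpair1r add0r subr0.
Qed.

Lemma hmulg_hinv1 g : hmul g (hinv hone) =1 g.
Proof.
move=> k; case: (boolP (k < 2 * n)%N) => hk.
  by rewrite hmul_low // hinv_low // oppr0 addr0.
by rewrite hmul_high // hinv_high // hpairNl !hpair1l /hone; ring.
Qed.

Lemma hinvK (g : heis n) : hinv (hinv g) =1 g.
Proof.
move=> k; case: (boolP (k < 2 * n)%N) => hk; first by rewrite !hinv_low ?opprK.
by rewrite !hinv_high // hpairNl hpairNr; ring.
Qed.

Lemma hinv_ext (g h : heis n) : g =1 h -> hinv g =1 hinv h.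
Proof. by move=> e k; rewrite /hinv /hpair e; under eq_bigr do rewrite !e. Qed.

Lemma hmul_hinvA (x g h : heis n) :
  hmul (hmul x (hinv h)) (hinv g) =1 hmul x (hinv (hmul g h)).
Proof.
move=> k; case: (boolP (k < 2 * n)%N) => hk.
  by rewrite !(hmul_low, hinv_low) //; ring.
by rewrite !(hmul_high, hinv_high) // !(hpairNl, hpairNr, hpairDl, hpairDr); ring.
Qed.

Lemma hgen_diag (i : 'I_(2 * n).+1) : hgen i i = 1.
Proof. by rewrite /hgen eqxx. Qed.

End HeisenbergGroup.

Arguments hone {n}.
Arguments ctr_high {n}.

Section RowSums.
Variables (R : pzRingType) (m : nat) (f : 'I_m -> R) (j : 'I_m).

Lemma row_sum1 : \sum_(k < m) (1%:M : 'M[R]_m) j k * f k = f j.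
Proof.
rewrite (bigD1 j) //= big1 ?addr0 => [|k /negbTE hk]; first by rewrite mxE eqxx mul1r.
by rewrite mxE eq_sym hk mul0r.
Qed.

Lemma row_sumD (A B : 'M[R]_m) :
  \sum_(k < m) (A + B) j k * f k = \sum_(k < m) A j k * f k + \sum_(k < m) B j k * f k.
Proof. by rewrite -big_split; apply: eq_bigr => k _; rewrite mxE mulrDl. Qed.

Lemma row_sum_sum I (r : seq I) (P : pred I) (X : I -> 'M[R]_m) :
  \sum_(k < m) (\sum_(u <- r | P u) X u) j k * f k =
  \sum_(u <- r | P u) \sum_(k < m) X u j k * f k.
Proof. by rewrite exchange_big; apply: eq_bigr => k _; rewrite summxE big_distrl. Qed.

Lemma row_sum_delta x (a b : 'I_m) :
  \sum_(k < m) (x *: delta_mx a b) j k * f k = x * (j == a)%:R * f b.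
Proof.
rewrite (bigD1 b) //= big1 ?addr0 => [|k /negbTE hk]; first by rewrite !mxE eqxx andbT.
by rewrite !mxE hk andbF mulr0 mul0r.
Qed.

End RowSums.

Lemma eq_inord_val m (j : 'I_m.+1) u : (u <= m)%N -> (j == inord u) = (j == u :> nat).
Proof. by move=> hu; rewrite -(inj_eq val_inj) /= inordK. Qed.

Section NickelModule.
Variable n : nat.

Local Notation ctr := (inord (2 * n) : 'I_(2 * n).+1).
Local Notation tctr := (inord (2 * n) : 'I_(2 * n).+2).
Variable s : {perm 'I_(2 * n).+2}.

Lemma tbasis_ext u (g h : heis n) : g =1 h -> tbasis u g = tbasis u h.
Proof. by rewrite /tbasis => ->. Qed.

Lemma tbasis_inord u (h : heis n) : (u <= 2 * n)%N -> tbasis (inord u) h = h (inord u).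
Proof. by move=> hu; rewrite /tbasis inordK ?ifT //; lia. Qed.

Lemma high_le (i : 'I_n) : (n + i <= 2 * n)%N.
Proof. by have := ltn_ord i; lia. Qed.

Lemma tbasis_max (h : heis n) : tbasis ord_max h = 1.
Proof. by rewrite /tbasis ltnn. Qed.

Lemma nickel_mat_mul (g h : heis n) A B :
  nickel_mat s g A -> nickel_mat s h B -> nickel_mat s (hmul g h) (A *m B).
Proof.
move=> hA hB j x.
rewrite /hact -(tbasis_ext _ (hmul_hinvA x g h)) -/(hact g _ _) hA.
under eq_bigr => l _ do rewrite -/(hact h (tbasis (s l)) x) hB big_distrr.
rewrite exchange_big /=; apply: eq_bigr => k _.
by rewrite mxE big_distrl /=; apply: eq_bigr => l _; rewrite mulrA.
Qed.

Lemma nickel_mat1 : nickel_mat s hone 1%:M.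
Proof. by move=> j x; rewrite row_sum1 /hact (tbasis_ext _ (hmulg_hinv1 x)). Qed.

Lemma nickel_mat_inj (g h : heis n) A :
  nickel_mat s g A -> nickel_mat s h A -> g =1 h.
Proof.
move=> hg hh k.
have hinv_eq : hinv g =1 hinv h.
  move=> l; have := etrans (hg (s^-1 (inord l))%g hone)
                          (esym (hh (s^-1 (inord l))%g hone)).
  rewrite permKV /hact !(tbasis_ext _ (hmul1g _)).
  by rewrite !(tbasis_inord _ (ltn_ord l)) inord_val.
by rewrite -(hinvK g) -(hinvK h); apply: hinv_ext.
Qed.

Lemma sum_coord_delta (u : 'I_(2 * n).+2) (F : 'I_(2 * n).+1 -> int) :
  \sum_(k < (2 * n).+1) F k * (u == inord k)%:R =
  if (u < (2 * n).+1)%N then F (inord u) else 0.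
Proof.
case: ifP => hu.
  rewrite (bigD1 (inord u)) //= big1 ?addr0 => [|k hk].
    by rewrite (eq_inord_val _ (ltnW (ltn_ord _))) inordK // eqxx mulr1.
  rewrite (eq_inord_val _ (ltnW (ltn_ord k))); case: eqP => [huk|]; last by rewrite mulr0.
  by rewrite huk inord_val eqxx in hk.
apply: big1 => k _; rewrite (eq_inord_val _ (ltnW (ltn_ord k))).
by case: eqP => [huk|]; [rewrite huk ltn_ord in hu | rewrite mulr0].
Qed.

Definition nickel_mx (g : heis n) : 'M[int]_((2 * n).+2) :=
  1%:M + \sum_(k < (2 * n).+1) (- g k) *: delta_mx (inord k) ord_max
  + \sum_(i < n) g (inord i) *: delta_mx tctr (inord (n + i))
  + (- hpair g g) *: delta_mx tctr ord_max.

Lemma nickel_mx_row (g : heis n) u (f : 'I_(2 * n).+2 -> int) :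
  \sum_v nickel_mx g u v * f v =
    f u - (if (u < (2 * n).+1)%N then g (inord u) else 0) * f ord_max
    + (u == tctr)%:R *
        (\sum_(i < n) g (inord i) * f (inord (n + i)) - hpair g g * f ord_max).
Proof.
rewrite /nickel_mx !row_sumD row_sum1 !row_sum_sum row_sum_delta.
under eq_bigr => k _ do rewrite row_sum_delta.
under [X in _ + _ + X + _]eq_bigr => i _ do rewrite row_sum_delta mulrAC.
rewrite -!big_distrl /= (sum_coord_delta _ (fun k => - g k)).
by case: ifP => _; ring.
Qed.

Lemma nickel_mxE (g : heis n) u (h : heis n) :
  hact g (tbasis u) h = \sum_v nickel_mx g u v * tbasis v h.
Proof.
rewrite nickel_mx_row tbasis_max.
under eq_bigr => i _ do rewrite (tbasis_inord _ (high_le i)).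
rewrite -/(hpair g h) /hact /tbasis (eq_inord_val _ (leqnSn _)).
case: (ltngtP u (2 * n)) => hu.
- have hu1 : (u < (2 * n).+1)%N by rewrite ltnS ltnW.
  have hlow : ((inord u : 'I_(2 * n).+1) < 2 * n)%N by rewrite inordK.
  by rewrite hu1 hmul_low // hinv_low // mul0r; ring.
- by rewrite ltnNge hu /= !mul0r subr0 addr0.
- by rewrite hu ltnSn hmul_high ?ctr_high // hinv_high ?ctr_high // hpairNl mul1r; ring.
Qed.

Lemma nickel_mat_perm (g : heis n) :
  nickel_mat s g (\matrix_(j, k) nickel_mx g (s j) (s k)).
Proof.
move=> j h; rewrite nickel_mxE (reindex_inj (@perm_inj _ s)) /=.
by apply: eq_bigr => k _; rewrite mxE.
Qed.

Lemma nickel_mx_entry (g : heis n) u b :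
  nickel_mx g u b =
    (u == b)%:R - (if (u < (2 * n).+1)%N then g (inord u) else 0) * (ord_max == b)%:R
    + (u == tctr)%:R *
        (\sum_(i < n) g (inord i) * (inord (n + i) == b)%:R
         - hpair g g * (ord_max == b)%:R).
Proof.
rewrite -[nickel_mx g]mulmx1 mxE nickel_mx_row !mxE.
by under eq_bigr do rewrite mxE.
Qed.

Lemma nickel_mx_low_max (g : heis n) u :
  (u < 2 * n)%N -> nickel_mx g (inord u) ord_max = - g (inord u).
Proof.
move=> hu; have huv : (inord u : 'I_(2 * n).+2) = u :> nat by rewrite inordK //; lia.
rewrite nickel_mx_entry.
have -> : (inord u == ord_max :> 'I_(2 * n).+2) = false by rewrite -val_eqE /= huv; lia.
rewrite (eq_inord_val _ (leqnSn _)) huv (ltn_eqF hu) ifT; last lia.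
by rewrite eqxx mul0r mulr1 addr0 sub0r.
Qed.

Lemma nickel_mx_ctr_high (g : heis n) (i : 'I_n) :
  nickel_mx g tctr (inord (n + i)) = g (inord i).
Proof.
have hi := ltn_ord i.
have eq_high (j : 'I_n) : (inord (n + j) == inord (n + i) :> 'I_(2 * n).+2) = (j == i).
  rewrite (eq_inord_val _ (leqW (high_le i))) inordK ?eqn_add2l //.
  by have := ltn_ord j; lia.
rewrite nickel_mx_entry (eq_inord_val _ (leqW (high_le i))) inordK; last lia.
rewrite eqxx (bigD1 i) //= eq_high eqxx big1 => [|j /negbTE hj]; last first.
  by rewrite eq_high hj mulr0.
have -> : (2 * n == n + i)%N = false by apply/eqP; lia.
have -> : (ord_max == inord (n + i) :> 'I_(2 * n).+2) = false.
  by rewrite (eq_inord_val _ (leqW (high_le i))); apply/eqP => /=; lia.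
by rewrite /=; ring.
Qed.

Definition hcenter (N : int) : heis n := fun k => if (k < 2 * n)%N then 0 else N.

Lemma nickel_mx_center N :
  nickel_mx (hcenter N) = 1%:M + (- N) *: delta_mx tctr ord_max.
Proof.
have low0 (i : 'I_n) : hcenter N (inord i) = 0 by rewrite /hcenter inord_low_lt.
rewrite /nickel_mx (bigD1 ctr) //= big1 => [|k hk]; last first.
  move: hk; rewrite (eq_inord_val _ (leqnn _)) => hk.
  by rewrite /hcenter ifT ?oppr0 ?scale0r // ltn_neqAle hk -ltnS ltn_ord.
rewrite big1 => [|i _]; last by rewrite low0 scale0r.
rewrite /hpair big1 => [|i _]; last by rewrite low0 mul0r.
by rewrite /hcenter (negbTE ctr_high) !oppr0 scale0r !addr0 inordK.
Qed.

End NickelModule.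

Section PermutedMatrices.
Variables (m : nat) (s : {perm 'I_m}).

Lemma is_UT_perm_lt (N : 'M[int]_m) a b :
  is_UT (\matrix_(j, k) N (s j) (s k)) -> N a b != 0 -> a != b ->
  ((s^-1)%g a < (s^-1)%g b)%N.
Proof.
move=> hUT hab; apply: contraNT; rewrite -leqNgt leq_eqVlt => /orP [/eqP e | lt].
  by apply/eqP/(perm_inj (s := (s^-1)%g)); apply/val_inj.
have := (hUT ((s^-1)%g a) ((s^-1)%g b)).1 lt; rewrite mxE !permKV => e.
by rewrite e eqxx in hab.
Qed.

Lemma perm_conj_elem x (a b : 'I_m) :
  \matrix_(j, k) (1%:M + x *: delta_mx a b : 'M[int]_m) (s j) (s k) =
  1%:M + x *: delta_mx ((s^-1)%g a) ((s^-1)%g b).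
Proof. by apply/matrixP => j k; rewrite !mxE (inj_eq perm_inj) !(canF_eq (permK s)). Qed.

End PermutedMatrices.

Lemma nickel_mat_center n (s : {perm 'I_(2 * n).+2}) N :
  nickel_mat s (hcenter N)
    (1%:M + (- N) *: delta_mx ((s^-1)%g (inord (2 * n))) ((s^-1)%g ord_max)).
Proof. by rewrite -perm_conj_elem -nickel_mx_center; apply: nickel_mat_perm. Qed.

Section NickelOrder.
Variables (n : nat) (s : {perm 'I_(2 * n).+2}).
Hypothesis hUT : forall g A, nickel_mat s g A -> is_UT A.

Local Notation pos u := ((s^-1)%g (inord u : 'I_(2 * n).+2)).

Lemma high_before_max (i : 'I_n) : (pos (n + i) < (s^-1)%g ord_max)%N.
Proof.
have hi := ltn_ord i.
apply: (@is_UT_perm_lt _ _ (nickel_mx (hgen (inord (n + i))))).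
- exact: hUT (nickel_mat_perm s _).
- by rewrite nickel_mx_low_max ?hgen_diag //; lia.
- by rewrite -val_eqE /= inordK //; apply/eqP; lia.
Qed.

Lemma ctr_before_high (i : 'I_n) : (pos (2 * n) < pos (n + i))%N.
Proof.
have hi := ltn_ord i.
apply: (@is_UT_perm_lt _ _ (nickel_mx (hgen (inord i)))).
- exact: hUT (nickel_mat_perm s _).
- by rewrite nickel_mx_ctr_high hgen_diag.
- by rewrite -val_eqE /= !inordK //; apply/eqP; lia.
Qed.

Lemma ctr_max_chain : (1 < n)%N ->
  exists b c : 'I_(2 * n).+2,
    [/\ (pos (2 * n) < b)%N, (b < c)%N & (c < (s^-1)%g ord_max)%N].
Proof.
move=> hn; pose i0 : 'I_n := Ordinal (ltnW hn); pose i1 : 'I_n := Ordinal hn.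
have [lt0 lt1] := (ctr_before_high i0, ctr_before_high i1).
have [gt0 gt1] := (high_before_max i0, high_before_max i1).
case: (ltngtP (pos (n + i0)) (pos (n + i1))) => h.
- by exists (pos (n + i0)), (pos (n + i1)); split.
- by exists (pos (n + i1)), (pos (n + i0)); split.
- by move/val_inj/perm_inj/(congr1 val): h; rewrite /= !inordK; lia.
Qed.

End NickelOrder.

Section Growth.
Variables (n : nat) (s : {perm 'I_(2 * n).+2}).

Local Notation ctr := (inord (2 * n) : 'I_(2 * n).+1).

Definition low_bounded (L : nat) (g : heis n) :=
  forall k : 'I_(2 * n).+1, (k < 2 * n)%N -> `|g k| <= L%:Z.

Definition hbounded (L : nat) (g : heis n) :=
  low_bounded L g /\ `|g ctr| <= (n.+1 * L * L)%:Z.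

Lemma hpair_bound (g h : heis n) L1 L2 :
  low_bounded L1 g -> low_bounded L2 h -> `|hpair g h| <= (n * L1 * L2)%:Z.
Proof.
move=> hg hh; apply: le_trans (ler_norm_sum _ _ _) _.
have term (i : 'I_n) : `|g (inord i) * h (inord (n + i))| <= (L1 * L2)%:Z.
  by rewrite normrM PoszM ler_pM ?hg ?hh ?inord_low_lt ?inord_high_lt.
apply: le_trans (ler_sum _ (fun i _ => term i)) _.
by rewrite sumr_const card_ord -mulr_natr natz; lia.
Qed.

Lemma hbounded_mul (e q : heis n) L :
  hbounded 1 e -> hbounded L q -> hbounded L.+1 (hmul e q).
Proof.
move=> [e_low e_ctr] [q_low q_ctr]; split => [k hk|].
  by rewrite hmul_low //; have := e_low k hk; have := q_low k hk; lia.
rewrite hmul_high ?ctr_high //.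
have := hpair_bound q_low e_low; move: e_ctr q_ctr.
move: (e ctr) (q ctr) (hpair q e) => x y z; nia.
Qed.

Lemma hbounded_one : hbounded 0 hone.
Proof. by split => [k _|]; rewrite normr0. Qed.

Lemma hgen_bounded (i : 'I_(2 * n).+1) : low_bounded 1 (hgen i) /\ `|hgen i ctr| <= 1.
Proof. by split => [k _|]; rewrite /hgen; case: ifP. Qed.

Lemma nickel_gen_bounded B :
  nickel_gens s B -> exists e, nickel_mat s e B /\ hbounded 1 e.
Proof.
case=> i hB; have [gen_low gen_ctr] := hgen_bounded i.
case: hB => hB; [exists (hgen i) | exists (hinv (hgen i))]; split => //.
  by split => //; apply: le_trans gen_ctr _; lia.
split => [k hk|]; first by rewrite hinv_low // normrN gen_low.
rewrite hinv_high ?ctr_high //.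
by have := hpair_bound gen_low gen_low; move: gen_ctr; lia.
Qed.

Lemma nickel_word_bounded (w : seq 'M[int]_((2 * n).+2)) :
  (forall B, B \in w -> nickel_gens s B) ->
  exists q, nickel_mat s q (foldr mulmx 1%:M w) /\ hbounded (size w) q.
Proof.
elim: w => [|B w IH] hw.
  by exists hone; split; [exact: nickel_mat1 | exact: hbounded_one].
have [q [hq q_bd]] := IH (fun C hC => hw C (mem_behead (s := B :: w) hC)).
have [e [he e_bd]] := nickel_gen_bounded (hw B (mem_head _ _)).
by exists (hmul e q); split; [exact: nickel_mat_mul | exact: hbounded_mul].
Qed.

End Growth.

Lemma cube_le_quadratic c m : (0 < m)%N -> (m * m * m <= c * (m * m))%N -> (m <= c)%N.
Proof. by move=> m_gt0; rewrite [(c * _)%N]mulnC leq_pmul2l // muln_gt0 m_gt0. Qed.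

Lemma commutator_one_add (R : pzRingType) (P Q : R) :
  P * P = 0 -> Q * Q = 0 -> Q * P = 0 ->
  (1 + P) * (1 + Q) * (1 - P) * (1 - Q) = 1 + P * Q.
Proof.
move=> hPP hQQ hQP.
have hQ_P : (1 + Q) * (1 - P) = 1 - P + Q.
  by rewrite mulrDl mul1r mulrBr mulr1 hQP subr0.
have hP_QP : (1 + P) * (1 - P + Q) = 1 + Q + P * Q.
  by rewrite mulrDl mul1r !mulrDr mulrN mulr1 hPP oppr0 addr0 addrA (addrAC _ Q) subrK.
rewrite -(mulrA (1 + P)) hQ_P hP_QP mulrBr mulr1 !mulrDl mul1r hQQ -mulrA hQQ.
by rewrite mulr0 !addr0 addrAC addrK.
Qed.

Section Unitriangular.
Variable p : nat.

Local Notation elem a b x := (1%:M + x *: delta_mx a b : 'M[int]_p.+1).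

Lemma wlen_le_mul S k1 k2 (A B : 'M[int]_p.+1) :
  wlen_le S k1 A -> wlen_le S k2 B -> wlen_le S (k1 + k2) (A *m B).
Proof.
move=> [w1 [h1 [g1 ->]]] [w2 [h2 [g2 ->]]].
exists (w1 ++ w2); split; first by rewrite size_cat leq_add.
split; first by move=> C; rewrite mem_cat => /orP [] ?; [apply: g1 | apply: g2].
rewrite foldr_cat; elim: w1 {h1 g1} => [|C w1 IH] /=; first by rewrite mul1mx.
by rewrite -IH mulmxA.
Qed.

Lemma wlen_le_leq S k1 k2 (A : 'M[int]_p.+1) :
  (k1 <= k2)%N -> wlen_le S k1 A -> wlen_le S k2 A.
Proof. by move=> hk [w [hw hS]]; exists w; split => //; apply: leq_trans hk. Qed.

Lemma elem_mul (a b : 'I_p.+1) x y : a != b -> elem a b x *m elem a b y = elem a b (x + y).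
Proof.
move=> hab; rewrite mulmxDl !mulmxDr !mul1mx mulmx1 -scalemxAl -scalemxAr.
rewrite mul_delta_mx_0 1?eq_sym // !scaler0 addr0 scalerDl addrA.
by rewrite addrAC.
Qed.

Lemma wlen_elem (a b : 'I_p.+1) x : (a < b)%N -> wlen_le (@ut_gens _) `|x|%N (elem a b x).
Proof.
move=> hab; have hne : a != b by rewrite neq_ltn hab.
have step e y k : elem a b e = 1%:M + delta_mx a b \/ elem a b e = 1%:M - delta_mx a b ->
    wlen_le (@ut_gens _) k (elem a b y) -> wlen_le (@ut_gens _) k.+1 (elem a b (e + y)).
  move=> he hy; rewrite -elem_mul //; apply: (wlen_le_mul (k1 := 1)) hy.
  exists [:: elem a b e]; split => //; split; last by rewrite /= mulmx1.
  by move=> C; rewrite inE => /eqP ->; exists a, b.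
suff elem_nat (k : nat) : wlen_le (@ut_gens _) k (elem a b k%:Z) /\
                         wlen_le (@ut_gens _) k (elem a b (- k%:Z)).
  by case: x => k; [case: (elem_nat k) | rewrite NegzE; case: (elem_nat k.+1)].
elim: k => [|k [IHpos IHneg]].
  by split; exists [::]; rewrite /= ?oppr0 scale0r addr0.
split.
  have -> : k.+1%:Z = 1 + k%:Z by lia.
  by apply: step IHpos; left; rewrite scale1r.
have -> : - k.+1%:Z = -1 + - k%:Z by lia.
by apply: step IHneg; right; rewrite scaleN1r.
Qed.

Lemma elem_commutator (a b c : 'I_p.+1) x y : (a < b)%N -> (b < c)%N ->
  elem a b x *m elem b c y *m elem a b (- x) *m elem b c (- y) = elem a c (x * y).
Proof.
move=> hab hbc; have hac := ltn_trans hab hbc.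
have delta0 u v (i j k l : 'I_p.+1) : j != k ->
    u *: (delta_mx i j : 'M[int]_p.+1) * (v *: delta_mx k l) = 0.
  by move=> hjk; rewrite -scalerAl -scalerAr -mulmxE mul_delta_mx_0 // !scaler0.
rewrite !scaleNr !mulmxE idmxE commutator_one_add.
- by rewrite -scalerAl -scalerAr -mulmxE mul_delta_mx scalerA.
- by rewrite delta0 // neq_ltn hab orbT.
- by rewrite delta0 // neq_ltn hbc orbT.
- by rewrite delta0 // neq_ltn hac orbT.
Qed.

Lemma wlen_elem_commutator (a b c : 'I_p.+1) x y k1 k2 k3 k4 :
  (a < b)%N -> (b < c)%N ->
  wlen_le (@ut_gens _) k1 (elem a b x) -> wlen_le (@ut_gens _) k2 (elem b c y) ->
  wlen_le (@ut_gens _) k3 (elem a b (- x)) -> wlen_le (@ut_gens _) k4 (elem b c (- y)) ->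
  wlen_le (@ut_gens _) (k1 + k2 + k3 + k4) (elem a c (x * y)).
Proof.
move=> hab hbc h1 h2 h3 h4; rewrite -(elem_commutator _ _ hab hbc).
exact: wlen_le_mul (wlen_le_mul (wlen_le_mul h1 h2) h3) h4.
Qed.

Lemma wlen_elem_mul2 (a b c : 'I_p.+1) x y : (a < b)%N -> (b < c)%N ->
  wlen_le (@ut_gens _) (2 * (`|x| + `|y|)) (elem a c (x * y)).
Proof.
move=> hab hbc.
have := wlen_elem_commutator hab hbc (wlen_elem x hab) (wlen_elem y hbc)
          (wlen_elem (- x) hab) (wlen_elem (- y) hbc).
by rewrite !abszN; apply: wlen_le_leq; lia.
Qed.

Lemma wlen_elem_mul3 (a b c d : 'I_p.+1) x y z :
  (a < b)%N -> (b < c)%N -> (c < d)%N ->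
  wlen_le (@ut_gens _) (4 * (`|x| + `|y|) + 2 * `|z|) (elem a d (x * y * z)).
Proof.
move=> hab hbc hcd; have hac := ltn_trans hab hbc.
have hxy := wlen_elem_mul2 (- x) y hab hbc; rewrite mulNr in hxy.
have := wlen_elem_commutator hac hcd (wlen_elem_mul2 x y hab hbc) (wlen_elem z hcd)
          hxy (wlen_elem (- z) hcd).
by rewrite !abszN; apply: wlen_le_leq; lia.
Qed.

Lemma wlen_elem_cube (a b c d : 'I_p.+1) (m : nat) :
  (a < b)%N -> (b < c)%N -> (c < d)%N ->
  wlen_le (@ut_gens _) (10 * m) (elem a d (- (m * m * m)%N%:Z)).
Proof.
move=> hab hbc hcd; have := wlen_elem_mul3 m%:Z m%:Z (- m%:Z) hab hbc hcd.
by rewrite mulrN -!PoszM !abszN !absz_nat; apply: wlen_le_leq; lia.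
Qed.

End Unitriangular.

Theorem theorem4p6 (n : nat) (hn : (2 <= n)%N) (s : {perm 'I_(2 * n).+2}) :
  (forall (g : heis n) (A : 'M[int]_((2 * n).+2)), nickel_mat s g A -> is_UT A) ->
  distorted (nickel_image s) (nickel_gens s) (@ut_gens _).
Proof.
move=> hUT [C hC].
have [b [c [hb hbc hc]]] := ctr_max_chain hUT hn.
pose m := (100 * n.+1 * C * C).+1.
have hA := nickel_mat_center s (m * m * m)%N.
have [w [hL [hw eA]]] :=
  hC _ _ (ex_intro (nickel_mat s ^~ _) _ hA) (wlen_elem_cube m hb hbc hc).
have [q [hq [_ q_ctr]]] := nickel_word_bounded hw; rewrite -eA in hq.
have := nickel_mat_inj hA hq (inord (2 * n)).
rewrite /hcenter (negbTE ctr_high) => q_eq.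
have : (m * m * m <= (100 * n.+1 * C * C) * (m * m))%N.
  have {}q_ctr : (m * m * m <= n.+1 * size w * size w)%N.
    by move: q_ctr; rewrite -q_eq; lia.
  apply: (leq_trans q_ctr); apply: leq_trans (leq_mul (leq_mul (leqnn _) hL) hL) _.
  by apply: eq_leq; ring.
by move/(cube_le_quadratic (ltn0Sn _)); rewrite ltnn.
Qed.
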